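(* Consider a finite-horizon tabular MDP with stationary transition kernel $P$, $S$ states, $A$ actions, horizon $H$. Fix $t\in[H]$ and $u>0$. Let $\mathcal D_2$ consist of $l$ i.i.d. episodes from behavior policy $\mu$, and let $V_{t+1},V^{\rm in}_{t+1}:\mathcal S\to\mathbb R$ be fixed (not depending on $\mathcal D_2$) with $\|V_{t+1}-V^{\rm in}_{t+1}\|_\infty\le2u$. Let $n'_{s,a}=\sum_{j=1}^l\sum_{v=1}^H\mathbf 1[s'^{(j)}_v=s,a'^{(j)}_v=a]$, $f(s,a)=4u\sqrt{\log(2HSA/\delta)/(l\sum_{t=1}^Hd^\mu_t(s,a))}$, and define $g_t(s,a)=P(\cdot|s,a)^\top[V_{t+1}-V^{\rm in}_{t+1}]-f(s,a)$ if $n'_{s,a}\le\frac12l\sum_{t=1}^Hd^\mu_t(s,a)$, and otherwise \[ g_t(s,a)=\frac1{n'_{s,a}}\sum_{j=1}^l\sum_{v=1}^H[V_{t+1}(s'^{(j)}_{v+1})-V^{\rm in}_{t+1}(s'^{(j)}_{v+1})]\mathbf 1[s'^{(j)}_v=s,a'^{(j)}_v=a]-f(s,a). \] Then with probability at least $1-\delta/H$, for all $(s,a)$ with $\sum_td^\mu_t(s,a)>0$, \[ 0\le P(\cdot|s,a)^\top[V_{t+1}-V^{\rm in}_{t+1}]-g_t(s,a)\le8u\sqrt{\frac{\log(2HSA/\delta)}{l\sum_{t=1}^Hd^\mu_t(s,a)}}. \]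
   Context: Episodes: $s_1\sim d_1$, $a_v\sim\mu_v(\cdot|s_v)$, $s_{v+1}\sim P(\cdot|s_v,a_v)$; $(s'^{(j)}_v,a'^{(j)}_v)$ denote the $j$-th episode of $\mathcal D_2$. $d^\mu_t(s,a)=\mathbb P^\mu(s_t=s,a_t=a)$. $\delta\in(0,1)$. *)

From HB Require Import structures.
From mathcomp Require Import all_boot all_order all_algebra.
From mathcomp Require Import reals exp.
Set Implicit Arguments. Unset Strict Implicit. Unset Printing Implicit Defensive.
Import Order.TTheory GRing.Theory Num.Theory.
Local Open Scope ring_scope.

(* An episode of length H: states s_1..s_{H+1} (indices 0..H of 'I_H.+1)
   and actions a_1..a_H (indices 0..H-1 of 'I_H). *)
Notation traj S A H := ({ffun 'I_H.+1 -> S} * {ffun 'I_H -> A})%type.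

Section MDP.
Variables (R : realType) (S A : finType) (H : nat).

Definition is_dist (T : finType) (p : T -> R) :=
  (forall x, 0 <= p x) /\ \sum_(x : T) p x = 1.

Definition st (e : traj S A H) (v : 'I_H) : S := e.1 (widen_ord (leqnSn H) v).
Definition act (e : traj S A H) (v : 'I_H) : A := e.2 v.
Definition nst (e : traj S A H) (v : 'I_H) : S := e.1 (lift ord0 v).

Variables (d1 : S -> R) (mu : 'I_H -> S -> A -> R) (P : S -> A -> S -> R).

Definition ep_prob (e : traj S A H) : R :=
  d1 (e.1 ord0) *
  \prod_(v < H) (mu v (st e v) (act e v) * P (st e v) (act e v) (nst e v)).

Definition dmu (t : 'I_H) (s : S) (a : A) : R :=
  \sum_(e : traj S A H | (st e t == s) && (act e t == a)) ep_prob e.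

Definition dsum (s : S) (a : A) : R := \sum_(t < H) dmu t s a.

Definition data_prob (l : nat) (D : {ffun 'I_l -> traj S A H}) : R :=
  \prod_(j < l) ep_prob (D j).

Definition ncount (l : nat) (D : {ffun 'I_l -> traj S A H}) (s : S) (a : A) : nat :=
  \sum_(j < l) \sum_(v < H) ((st (D j) v == s) && (act (D j) v == a)).

Definition PV (V Vin : S -> R) (s : S) (a : A) : R :=
  \sum_(s' : S) P s a s' * (V s' - Vin s').

Definition logterm (delta : R) : R :=
  ln (2 * H%:R * #|S|%:R * #|A|%:R / delta).

Definition fbonus (u delta : R) (l : nat) (s : S) (a : A) : R :=
  4 * u * Num.sqrt (logterm delta / (l%:R * dsum s a)).

Definition gest (V Vin : S -> R) (u delta : R) (l : nat)
    (D : {ffun 'I_l -> traj S A H}) (s : S) (a : A) : R :=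
  if (ncount D s a)%:R <= 2^-1 * l%:R * dsum s a
  then PV V Vin s a - fbonus u delta l s a
  else ((ncount D s a)%:R)^-1 *
         (\sum_(j < l) \sum_(v < H)
            (V (nst (D j) v) - Vin (nst (D j) v)) *
            ((st (D j) v == s) && (act (D j) v == a))%:R)
       - fbonus u delta l s a.

End MDP.

(* Fix (s, a) and a sign, and consider the event that (s, a) is visited more
   than l * dsum(s, a) / 2 times while the empirical mean of the increments
   V - Vin observed after these visits deviates from PV(s, a) by more than
   f(s, a) in that direction.  The increments lie in [-2u, 2u], so by Hoeffding's
   lemma the product over all episodes and steps of
   exp ((lambda * (+-(V - Vin)(s_{v+1}) -+ PV(s, a)) - 2 lambda^2 u^2) * 1[s_v = s, a_v = a])
   has expectation at most 1 under the data law.  With L = log (2HSA / delta),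
   k = l * dsum(s, a) and lambda = sqrt (L / k) / u, the product exceeds e^L on
   the event, so by Markov's inequality the event has probability at most
   delta / (2HSA).  A union bound over the 2SA events leaves probability at least
   1 - delta / H, and outside all of them g(s, a) lies in [PV(s, a) - 2 f, PV(s, a)],
   where 2 f(s, a) = 8 u sqrt (L / k). *)

From Pilot Require Import Defs.
From HB Require Import structures.
From mathcomp Require Import all_boot all_order all_algebra.
From mathcomp Require Import reals exp sequences normedtype derive realfun.
From mathcomp Require Import ring lra.
Set Implicit Arguments. Unset Strict Implicit. Unset Printing Implicit Defensive.
Import Order.TTheory GRing.Theory Num.Theory.
Import numFieldNormedType.Exports.
Local Open Scope ring_scope.

Section DerivativeSign.
Variables (R : realType) (f f' : R -> R).
Hypothesis df : forall x : R, is_derive x 1 f (f' x).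

Let derive1_f x : derive1 f x = f' x.
Proof. by rewrite derive1E; case: (df x). Qed.

Let derivable_f x : derivable f x 1.
Proof. by case: (df x). Qed.

Lemma derive_le0_nincr : (forall x, f' x <= 0) -> {homo f : x y /~ x <= y}.
Proof.
move=> f'le0 x y yx.
apply: (@ler0_derive1_nincry _ f y (fun z _ => @derivable_f z) _ _ y x (lexx y) yx).
- by move=> z _; rewrite derive1_f.
- exact: derivable_within_continuous.
Qed.

Lemma derive_nincr_le_root (c : R) :
  {homo f' : x y /~ x <= y} -> f' c = 0 -> forall x, f x <= f c.
Proof.
move=> f'nincr f'c0 x; have [cx|xc] := leP c x.
  apply: (@ler0_derive1_nincry _ f c (fun z _ => @derivable_f z) _ _ c x (lexx c) cx).
  - by move=> z; rewrite in_itv /= andbT derive1_f -f'c0 => /ltW; apply: f'nincr.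
  - exact: derivable_within_continuous.
apply: (@ger0_derive1_ndecrNy _ f c (fun z _ => @derivable_f z) _ _ x c (ltW xc) (lexx c)).
- by move=> z; rewrite in_itv /= derive1_f -f'c0 => /ltW; apply: f'nincr.
- exact: derivable_within_continuous.
Qed.

End DerivativeSign.

Section HoeffdingLemma.
Variables (R : realType) (p : R).
Hypotheses (p_ge0 : 0 <= p) (p_le1 : p <= 1).

Let mgf (h : R) := 1 - p + p * expR h.

Let mgf_gt0 h : 0 < mgf h.
Proof.
rewrite /mgf; have [->|pn0] := eqVneq p 0; first by rewrite subr0 mul0r addr0.
by rewrite ltr_pwDr ?subr_ge0 // mulr_gt0 ?expR_gt0 // lt_def pn0.
Qed.

Let mgf0 : mgf 0 = 1.
Proof. by rewrite /mgf expR0 mulr1 subrK. Qed.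

Let is_derive_lnmgf (h : R) :
  is_derive h 1 (fun x => ln (mgf x)) ((mgf h)^-1 * (p * expR h)).
Proof.
apply: (is_derive1_comp (is_derive1_ln (mgf_gt0 h))).
by apply: is_derive_eq; rewrite add0r mul1r.
Qed.

(* [p e^h / mgf h], written through [expR] so that the chain rule gives its
   derivative [tilt h * (1 - tilt h)] *)
Let tilt (h : R) := p * expR (h - ln (mgf h)).

Let tiltE h : tilt h = (mgf h)^-1 * (p * expR h).
Proof. by rewrite /tilt expRB lnK ?posrE //; ring. Qed.

Let is_derive_tilt (h : R) : is_derive h 1 tilt (tilt h * (1 - tilt h)).
Proof.
have dg : is_derive h 1 (fun x => x - ln (mgf x)) (1 - tilt h).
  by rewrite tiltE; exact: is_deriveB (is_derive_id h 1) (is_derive_lnmgf h).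
have := @is_derive1_comp _ _ _ h _ _ (is_derive_expR _) dg.
by move=> ?; apply: is_derive_eq; rewrite /tilt /GRing.scale /=; ring.
Qed.

Let psi (h : R) := tilt h - p - h / 4.

Let is_derive_psi (h : R) : is_derive h 1 psi (tilt h * (1 - tilt h) - 4^-1).
Proof.
have := is_derive_tilt h => ?.
by rewrite /psi; apply: is_derive_eq; rewrite /GRing.scale /=; ring.
Qed.

Let phi (h : R) := ln (mgf h) - h * p - h ^+ 2 / 8.

Let is_derive_phi (h : R) : is_derive h 1 phi (psi h).
Proof.
have := is_derive_lnmgf h => ?.
rewrite /phi; apply: is_derive_eq; rewrite /psi tiltE /GRing.scale /=.
by field; rewrite gt_eqF.
Qed.

Lemma hoeffding_bernoulli (h : R) : 1 - p + p * expR h <= expR (h * p + h ^+ 2 / 8).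
Proof.
have psi_nincr : {homo psi : x y /~ x <= y}.
  apply: (@derive_le0_nincr _ psi (fun x => tilt x * (1 - tilt x) - 4^-1) is_derive_psi) => x.
  by have := sqr_ge0 (tilt x - 2^-1); nra.
have psi0 : psi 0 = 0.
  by rewrite /psi tiltE mgf0 invr1 expR0 !mul1r mulr1 subrr mul0r subr0.
change (mgf h <= expR (h * p + h ^+ 2 / 8)).
rewrite -[mgf h]lnK ?posrE // ler_expR.
have := derive_nincr_le_root is_derive_phi psi_nincr psi0 h.
rewrite /phi mgf0 ln1 !mul0r expr0n /= mul0r !subr0; lra.
Qed.

End HoeffdingLemma.

Section HoeffdingFinite.
Variable R : realType.

Lemma expR_ge_tangent (c x : R) : expR c * (1 + (x - c)) <= expR x.
Proof.
rewrite -[in leRHS](subrK c x) expRD [leRHS]mulrC.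
by rewrite ler_wpM2l ?expR_ge0 ?expR_ge1Dx.
Qed.

Lemma expR_le_chord (b t z : R) : 0 < b -> `|z| <= b ->
  expR (t * z) <= ((b - z) * expR (- (t * b)) + (b + z) * expR (t * b)) / (2 * b).
Proof.
move=> b_gt0; rewrite ler_norml => /andP[lez zle].
have le_l : (b - z) * (expR (t * z) * (1 + (- (t * b) - t * z))) <= (b - z) * expR (- (t * b)).
  by rewrite ler_wpM2l ?expR_ge_tangent // subr_ge0.
have le_r : (b + z) * (expR (t * z) * (1 + (t * b - t * z))) <= (b + z) * expR (t * b).
  by rewrite ler_wpM2l ?expR_ge_tangent //; lra.
rewrite ler_pdivlMr ?mulr_gt0 //; lra.
Qed.

Lemma hoeffding_lemma (T : finType) (pi Z : T -> R) (b t : R) :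
  (forall x, 0 <= pi x) -> \sum_x pi x = 1 -> 0 < b -> (forall x, `|Z x| <= b) ->
  \sum_x pi x * expR (t * (Z x - \sum_y pi y * Z y)) <= expR (t ^+ 2 * b ^+ 2 / 2).
Proof.
move=> pi_ge0 pi_sum1 b_gt0 Zb.
set m := \sum_y pi y * Z y.
have mean_cst c : \sum_x pi x * c = c by rewrite -big_distrl /= pi_sum1 mul1r.
have Z_ge x : - b <= Z x by have /andP[] : - b <= Z x <= b by rewrite -ler_norml.
have Z_le x : Z x <= b by have /andP[] : - b <= Z x <= b by rewrite -ler_norml.
have m_ge : - b <= m by rewrite -[- b]mean_cst; apply: ler_sum => x _; rewrite ler_wpM2l.
have m_le : m <= b by rewrite -[b]mean_cst; apply: ler_sum => x _; rewrite ler_wpM2l.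
set em := expR (- (t * b)); set ep := expR (t * b).
have mean_chord : \sum_x pi x * (((b - Z x) * em + (b + Z x) * ep) / (2 * b)) =
    ((b - m) * em + (b + m) * ep) / (2 * b).
  rewrite (eq_bigr (fun x => pi x * ((em + ep) / 2) + pi x * Z x * ((ep - em) / (2 * b))));
    last by move=> x _; field; rewrite gt_eqF.
  by rewrite big_split /= mean_cst -big_distrl /= -/m; field; rewrite gt_eqF.
have mgf_le : \sum_x pi x * expR (t * Z x) <= ((b - m) * em + (b + m) * ep) / (2 * b).
  by rewrite -mean_chord; apply: ler_sum => x _; rewrite ler_wpM2l // expR_le_chord.
set p := (b + m) / (2 * b).
have p_ge0 : 0 <= p by rewrite divr_ge0 ?mulr_ge0 //; lra.
have p_le1 : p <= 1 by rewrite ler_pdivrMr ?mulr_gt0 //; lra.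
have centred : \sum_x pi x * expR (t * (Z x - m)) =
    (\sum_x pi x * expR (t * Z x)) * expR (- (t * m)).
  by rewrite big_distrl /=; apply: eq_bigr => x _; rewrite -mulrA -expRD mulrBr.
have bernoulli_form : ((b - m) * em + (b + m) * ep) / (2 * b) * expR (- (t * m)) =
    (1 - p + p * expR (2 * t * b)) * expR (- (t * b) - t * m).
  have -> : expR (2 * t * b) = ep * ep by rewrite -expRD; congr expR; ring.
  rewrite expRD /em expRN -/ep /p.
  by field; rewrite !gt_eqF ?expR_gt0.
rewrite centred (le_trans (ler_wpM2r (expR_ge0 _) mgf_le)) // bernoulli_form.
apply: le_trans (ler_wpM2r (expR_ge0 _) (hoeffding_bernoulli p_ge0 p_le1 _)) _.
have -> : 2 * t * b * p = t * (b + m) by rewrite /p; field; rewrite gt_eqF.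
by rewrite -expRD ler_expR; lra.
Qed.

End HoeffdingFinite.

Section FiniteMeasure.
Variables (R : realFieldType) (T : finType) (p : T -> R).
Hypothesis p_ge0 : forall x, 0 <= p x.

Lemma markov_fin (W : T -> R) (E : pred T) (c : R) :
  (forall x, 0 <= W x) -> (forall x, E x -> c <= W x) ->
  c * \sum_(x | E x) p x <= \sum_x p x * W x.
Proof.
move=> W_ge0 EW; rewrite big_mkcond mulr_sumr; apply: ler_sum => x _.
case: ifP => [/EW cW|_]; last by rewrite mulr0 mulr_ge0.
by rewrite mulrC ler_wpM2l.
Qed.

Lemma union_bound_fin (I : finType) (E : pred T) (B : I -> pred T) :
  (forall x, E x -> exists i, B i x) ->
  \sum_(x | E x) p x <= \sum_i \sum_(x | B i x) p x.
Proof.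
move=> EB; under [leRHS]eq_bigr => i _ do rewrite big_mkcond.
rewrite exchange_big big_mkcond; apply: ler_sum => x _ /=.
have cond_ge0 (b : bool) : 0 <= (if b then p x else 0) by case: b.
case: ifP => [/EB [i Bix]|_]; last exact: sumr_ge0.
by rewrite (bigD1 i) //= Bix lerDl sumr_ge0.
Qed.

End FiniteMeasure.

Section ExtendFfun.
Variables (T : Type) (m : nat).

Definition rcons_ffun (g : {ffun 'I_m -> T}) (x : T) : {ffun 'I_m.+1 -> T} :=
  [ffun i => if unlift ord_max i is Some j then g j else x].

Lemma rcons_ffun_max g x : rcons_ffun g x ord_max = x.
Proof. by rewrite ffunE unlift_none. Qed.

Lemma rcons_ffun_val g x (i : 'I_m.+1) (j : 'I_m) : i = j :> nat -> rcons_ffun g x i = g j.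
Proof.
move=> ij; have -> : i = lift ord_max j by apply: ord_inj; rewrite lift_max.
by rewrite ffunE liftK.
Qed.

End ExtendFfun.

Lemma sum_rcons_ffun (R : nmodType) (T : finType) m (F : {ffun 'I_m.+1 -> T} -> R) :
  \sum_f F f = \sum_(g : {ffun 'I_m -> T}) \sum_x F (rcons_ffun g x).
Proof.
rewrite pair_big /= (reindex (fun gx => rcons_ffun gx.1 gx.2)) //.
exists (fun f : {ffun 'I_m.+1 -> T} => ([ffun j => f (lift ord_max j)], f ord_max)).
  move=> [g x] _ /=; rewrite rcons_ffun_max; congr (_, _).
  by apply/ffunP => j; rewrite ffunE (rcons_ffun_val _ _ (lift_max j)).
move=> f _; apply/ffunP => i; rewrite ffunE.
by case: unliftP => [j ->|->]; rewrite ?ffunE.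
Qed.

Section PathWeight.
Variables (R : comPzSemiRingType) (S A : finType).

Definition rcons_traj n (e : traj S A n) (a : A) (s' : S) : traj S A n.+1 :=
  (rcons_ffun e.1 s', rcons_ffun e.2 a).

Lemma sum_rcons_traj n (F : traj S A n.+1 -> R) :
  \sum_e F e = \sum_(e : traj S A n) \sum_a \sum_s' F (rcons_traj e a s').
Proof.
rewrite (eq_bigr (fun e => F (e.1, e.2))); last by case.
rewrite -(pair_bigA _ (fun x y => F (x, y))) /= sum_rcons_ffun.
transitivity (\sum_g1 \sum_s' \sum_g2 \sum_a F (rcons_ffun g1 s', rcons_ffun g2 a)).
  by apply: eq_bigr => g1 _; apply: eq_bigr => s' _; rewrite sum_rcons_ffun.
rewrite -(pair_bigA _ (fun g1 g2 => \sum_a \sum_s' F (rcons_traj (g1, g2) a s'))) /=.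
by apply: eq_bigr => g1 _; rewrite exchange_big; apply: eq_bigr => g2 _; rewrite exchange_big.
Qed.

Section RconsTraj.
Variables (n : nat) (e : traj S A n) (a : A) (s' : S).

Lemma st_rcons_traj (v : 'I_n) : st (rcons_traj e a s') (widen_ord (leqnSn n) v) = st e v.
Proof. exact: rcons_ffun_val. Qed.

Lemma act_rcons_traj (v : 'I_n) : act (rcons_traj e a s') (widen_ord (leqnSn n) v) = act e v.
Proof. exact: rcons_ffun_val. Qed.

Lemma nst_rcons_traj (v : 'I_n) : nst (rcons_traj e a s') (widen_ord (leqnSn n) v) = nst e v.
Proof. exact: rcons_ffun_val. Qed.

Lemma st_rcons_traj_max : st (rcons_traj e a s') ord_max = e.1 ord_max.
Proof. exact: rcons_ffun_val. Qed.

Lemma act_rcons_traj_max : act (rcons_traj e a s') ord_max = a.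
Proof. exact: rcons_ffun_max. Qed.

Lemma nst_rcons_traj_max : nst (rcons_traj e a s') ord_max = s'.
Proof.
by rewrite /nst (_ : lift ord0 ord_max = ord_max) ?rcons_ffun_max //; apply: val_inj.
Qed.

Lemma rcons_traj_ord0 : (rcons_traj e a s').1 ord0 = e.1 ord0.
Proof. exact: rcons_ffun_val. Qed.

End RconsTraj.

Definition path_weight n (d : S -> R) (K : 'I_n -> S -> A -> S -> R) (e : traj S A n) :=
  d (e.1 ord0) * \prod_(v < n) K v (st e v) (act e v) (nst e v).

Lemma sum_path_weightS n d (K : 'I_n.+1 -> S -> A -> S -> R) :
  \sum_e path_weight d K e =
  \sum_(e : traj S A n) path_weight d (fun v => K (widen_ord (leqnSn n) v)) e *
                        \sum_a \sum_s' K ord_max (e.1 ord_max) a s'.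
Proof.
rewrite sum_rcons_traj; apply: eq_bigr => e _.
rewrite mulr_sumr; apply: eq_bigr => a _; rewrite mulr_sumr; apply: eq_bigr => s' _.
rewrite /path_weight big_ord_recr rcons_traj_ord0 st_rcons_traj_max act_rcons_traj_max.
rewrite nst_rcons_traj_max -mulrA; congr (_ * (_ * _)); apply: eq_bigr => v _.
by rewrite st_rcons_traj act_rcons_traj nst_rcons_traj.
Qed.

Lemma sum_path_weight0 d (K : 'I_0 -> S -> A -> S -> R) :
  \sum_e path_weight d K e = \sum_s d s.
Proof.
have sum_ffun0 (T : finType) (c : R) : \sum_(f : {ffun 'I_0 -> T}) c = c.
  by rewrite sumr_const card_ffun card_ord expn0.
rewrite (eq_bigr (fun e : traj S A 0 => d (e.1 ord0))) => [|e _];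
  last by rewrite /path_weight big_ord0 mulr1.
rewrite -(pair_bigA _ (fun (x : {ffun 'I_1 -> S}) (_ : {ffun 'I_0 -> A}) => d (x ord0))) /=.
rewrite (eq_bigr (fun x : {ffun 'I_1 -> S} => d (x ord0))) => [|x _]; last exact: sum_ffun0.
rewrite sum_rcons_ffun -[RHS](sum_ffun0 S); apply: eq_bigr => g _.
by apply: eq_bigr => x _; rewrite (_ : ord0 = ord_max) ?rcons_ffun_max //; apply: val_inj.
Qed.

Lemma sum_path_weight n d (K : 'I_n -> S -> A -> S -> R) :
  (forall v s, \sum_a \sum_s' K v s a s' = 1) -> \sum_e path_weight d K e = \sum_s d s.
Proof.
elim: n K => [|n IHn] K K1; first exact: sum_path_weight0.
rewrite sum_path_weightS -(IHn (fun v => K (widen_ord (leqnSn n) v))) => [|v s]; last exact: K1.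
by apply: eq_bigr => e _; rewrite K1 mulr1.
Qed.

End PathWeight.

Lemma sum_path_weight_le (R : numDomainType) (S A : finType) n (d : S -> R)
    (K : 'I_n -> S -> A -> S -> R) :
  (forall s, 0 <= d s) -> (forall v s a s', 0 <= K v s a s') ->
  (forall v s, \sum_a \sum_s' K v s a s' <= 1) ->
  \sum_e path_weight d K e <= \sum_s d s.
Proof.
elim: n K => [|n IHn] K d_ge0 K_ge0 K_le1; first by rewrite sum_path_weight0.
rewrite sum_path_weightS.
apply: le_trans (IHn _ d_ge0 (fun v => K_ge0 _) (fun v => K_le1 _)).
apply: ler_sum => e _; apply: ler_piMr; last exact: K_le1.
by rewrite mulr_ge0 ?prodr_ge0.
Qed.

Section EpisodeLaw.
Variables (R : realType) (S A : finType) (H : nat).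
Variables (d1 : S -> R) (mu : 'I_H -> S -> A -> R) (P : S -> A -> S -> R).
Hypotheses (hd1 : is_dist d1) (hmu : forall v s, is_dist (mu v s)).
Hypothesis hP : forall s a, is_dist (P s a).

Local Notation ep_prob := (ep_prob d1 mu P).
Local Notation data_prob := (data_prob d1 mu P).

Lemma ep_prob_ge0 e : 0 <= ep_prob e.
Proof.
rewrite mulr_ge0 ?hd1.1 //; apply: prodr_ge0 => v _.
by rewrite mulr_ge0 ?(hmu _ _).1 ?(hP _ _).1.
Qed.

Lemma sum_ep_prob : \sum_e ep_prob e = 1.
Proof.
rewrite (sum_path_weight _ (K := fun v s a s' => mu v s a * P s a s')) ?hd1.2 // => v s.
under eq_bigr => a _ do rewrite -mulr_sumr (hP s a).2 mulr1.
exact: (hmu v s).2.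
Qed.

Lemma ep_expect_prod_le1 (y : S -> A -> S -> R) :
  (forall s a s', 0 <= y s a s') -> (forall s a, \sum_s' P s a s' * y s a s' <= 1) ->
  \sum_e ep_prob e * \prod_(v < H) y (st e v) (act e v) (nst e v) <= 1.
Proof.
move=> y_ge0 Py_le1.
rewrite (eq_bigr (path_weight d1 (fun v s a s' => mu v s a * P s a s' * y s a s')));
  last by move=> e _; rewrite /Defs.ep_prob /path_weight -mulrA -big_split.
rewrite -[leRHS]hd1.2.
apply: sum_path_weight_le => [s|v s a s'|v s]; first exact: hd1.1.
  by rewrite !mulr_ge0 ?(hmu _ _).1 ?(hP _ _).1.
rewrite -(hmu v s).2; apply: ler_sum => a _.
under eq_bigr => s' _ do rewrite -mulrA.
by rewrite -mulr_sumr ler_piMr ?(hmu _ _).1.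
Qed.

Variable l : nat.

Lemma data_prob_ge0 (D : {ffun 'I_l -> traj S A H}) : 0 <= data_prob D.
Proof. by apply: prodr_ge0 => j _; exact: ep_prob_ge0. Qed.

Lemma sum_data_prob : \sum_(D : {ffun 'I_l -> traj S A H}) data_prob D = 1.
Proof.
rewrite /Defs.data_prob -(bigA_distr_bigA (fun _ e => ep_prob e)) /=.
by rewrite big1 // => j _; exact: sum_ep_prob.
Qed.

Lemma data_expect_prod_le1 (Y : traj S A H -> R) :
  (forall e, 0 <= Y e) -> \sum_e ep_prob e * Y e <= 1 ->
  \sum_(D : {ffun 'I_l -> traj S A H}) data_prob D * \prod_(j < l) Y (D j) <= 1.
Proof.
move=> Y_ge0 EY_le1.
under eq_bigr => D _ do rewrite -big_split /=.
rewrite -(bigA_distr_bigA (fun _ e => ep_prob e * Y e)) /=.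
by apply: prodr_ile1 => j _; rewrite EY_le1 sumr_ge0 // => e _; rewrite mulr_ge0 ?ep_prob_ge0.
Qed.

End EpisodeLaw.

Lemma chernoff_exponent (R : rcfType) (L k u N z : R) :
  0 < u -> 0 <= L -> 0 < k -> k <= 2 * N -> N * (4 * u * Num.sqrt (L / k)) <= z ->
  L <= Num.sqrt (L / k) / u * z - (Num.sqrt (L / k) / u) ^+ 2 * (2 * u ^+ 2) * N.
Proof.
move=> u_gt0 L_ge0 k_gt0 k_le2N Nz.
set r := Num.sqrt (L / k).
have r2 : r ^+ 2 = L / k by rewrite sqr_sqrtr // divr_ge0 // ltW.
have lin : 4 * N * r ^+ 2 <= r / u * z.
  have -> : 4 * N * r ^+ 2 = r / u * (N * (4 * u * r)) by field; rewrite gt_eqF.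
  by rewrite ler_wpM2l // divr_ge0 ?sqrtr_ge0 // ltW.
have quad : (r / u) ^+ 2 * (2 * u ^+ 2) * N = 2 * N * r ^+ 2 by field; rewrite gt_eqF.
have L_le : L <= 2 * N * r ^+ 2.
  rewrite r2 mulrA ler_pdivlMr // mulrC ler_wpM2r //.
rewrite quad; lra.
Qed.

Section Concentration.
Variables (R : realType) (S A : finType) (H : nat).
Variables (d1 : S -> R) (mu : 'I_H -> S -> A -> R) (P : S -> A -> S -> R).
Hypotheses (hd1 : is_dist d1) (hmu : forall v s, is_dist (mu v s)).
Hypothesis hP : forall s a, is_dist (P s a).
Variables (V Vin : S -> R) (u delta : R) (l : nat).
Hypotheses (u_gt0 : 0 < u) (delta_gt0 : 0 < delta) (delta_lt1 : delta < 1).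
Hypothesis hV : forall s, `|V s - Vin s| <= 2 * u.
Hypothesis H_gt0 : (0 < H)%N.

Local Notation data_prob := (data_prob d1 mu P).
Local Notation dsum := (dsum d1 mu P).
Local Notation PV := (PV P V Vin).
Local Notation fbonus := (fbonus d1 mu P u delta l).

Lemma mgf_increment_le1 (s : S) (a : A) (sigma lambda : R) : `|sigma| <= 1 ->
  \sum_s' P s a s' * expR (lambda * (sigma * (V s' - Vin s' - PV s a)) - lambda ^+ 2 * (2 * u ^+ 2))
  <= 1.
Proof.
move=> sigma_le1.
have Zb s' : `|sigma * (V s' - Vin s')| <= 2 * u.
  by rewrite normrM -[leRHS]mul1r ler_pM ?normr_ge0.
have two_u_gt0 : 0 < 2 * u by rewrite mulr_gt0.
have := hoeffding_lemma lambda (hP s a).1 (hP s a).2 two_u_gt0 Zb.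
have -> : \sum_y P s a y * (sigma * (V y - Vin y)) = sigma * PV s a.
  by rewrite /Defs.PV mulr_sumr; apply: eq_bigr => y _; ring.
set c := lambda ^+ 2 * (2 * u ^+ 2) => hoeffding.
have -> : \sum_s' P s a s' * expR (lambda * (sigma * (V s' - Vin s' - PV s a)) - c) =
    (\sum_s' P s a s' * expR (lambda * (sigma * (V s' - Vin s') - sigma * PV s a))) * expR (- c).
  by rewrite big_distrl /=; apply: eq_bigr => s' _; rewrite -mulrA -expRD; congr (_ * expR _); ring.
apply: le_trans (ler_wpM2r (expR_ge0 _) hoeffding) _.
by rewrite -expRD /c (_ : _ + _ = 0) ?expR0 //; field.
Qed.

Local Notation Dt := {ffun 'I_l -> traj S A H}.

Definition incr_sum (D : Dt) (s : S) (a : A) : R :=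
  \sum_(j < l) \sum_(v < H)
    (V (nst (D j) v) - Vin (nst (D j) v)) * ((st (D j) v == s) && (act (D j) v == a))%:R.

Definition deviates (s : S) (a : A) (b : bool) (D : Dt) : bool :=
  (2^-1 * l%:R * dsum s a < (ncount D s a)%:R) &&
  ((ncount D s a)%:R * fbonus s a <
     (-1) ^+ b * (incr_sum D s a - (ncount D s a)%:R * PV s a)).

Definition score_step (s : S) (a : A) (lambda sigma : R) (s0 : S) (a0 : A) (s1 : S) : R :=
  (lambda * (sigma * (V s1 - Vin s1 - PV s a)) - lambda ^+ 2 * (2 * u ^+ 2)) *
  ((s0 == s) && (a0 == a))%:R.

Lemma sum_score_step s a lambda sigma (D : Dt) :
  \sum_(j < l) \sum_(v < H) score_step s a lambda sigma (st (D j) v) (act (D j) v) (nst (D j) v) =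
  lambda * (sigma * (incr_sum D s a - (ncount D s a)%:R * PV s a)) -
  lambda ^+ 2 * (2 * u ^+ 2) * (ncount D s a)%:R.
Proof.
rewrite /score_step; move: (PV s a) (lambda ^+ 2 * (2 * u ^+ 2)) => m c.
set N := (ncount D s a)%:R.
have -> : lambda * (sigma * (incr_sum D s a - N * m)) - c * N =
  lambda * sigma * incr_sum D s a - (lambda * sigma * m + c) * N by ring.
rewrite /N /incr_sum /ncount natr_sum !mulr_sumr -sumrB; apply: eq_bigr => j _.
rewrite natr_sum !mulr_sumr -sumrB; apply: eq_bigr => v _; ring.
Qed.

Lemma expR_score_expect_le1 s a lambda sigma : `|sigma| <= 1 ->
  \sum_(D : Dt) data_prob D * \prod_(j < l) \prod_(v < H)
    expR (score_step s a lambda sigma (st (D j) v) (act (D j) v) (nst (D j) v)) <= 1.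
Proof.
move=> sigma_le1.
apply: (@data_expect_prod_le1 _ _ _ _ _ _ _ hd1 hmu hP l
  (fun e => \prod_(v < H) expR (score_step s a lambda sigma (st e v) (act e v) (nst e v))))
  => [e|].
  by apply: prodr_ge0 => v _; exact: expR_ge0.
apply: (ep_expect_prod_le1 hd1 hmu hP (y := fun s0 a0 s1 =>
  expR (score_step s a lambda sigma s0 a0 s1))) => [s0 a0 s1|s0 a0]; first exact: expR_ge0.
rewrite /score_step; have [/andP[/eqP -> /eqP ->]|_] := boolP ((s0 == s) && (a0 == a)).
  by under eq_bigr do rewrite mulr1; exact: mgf_increment_le1.
by under eq_bigr do rewrite mulr0 expR0 mulr1; rewrite (hP _ _).2.
Qed.

Let twoHSA : R := 2 * H%:R * #|S|%:R * #|A|%:R.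

Let twoHSA_ge1 (s : S) (a : A) : 1 <= twoHSA.
Proof.
rewrite /twoHSA -[2]/(2%:R) -!natrM ler1n !muln_gt0 H_gt0.
by apply/andP; split; apply/card_gt0P; [exists s | exists a].
Qed.

Lemma deviates_prob s a b : 0 < dsum s a ->
  \sum_(D | deviates s a b D) data_prob D <= delta / twoHSA.
Proof.
move=> dsum_gt0; have twoHSA_gt0 : 0 < twoHSA by apply: lt_le_trans (twoHSA_ge1 s a).
have [l0|l_gt0] := posnP l.
  rewrite big_pred0 ?divr_ge0 ?ltW // => D; apply/negbTE; rewrite negb_and -leNgt.
  rewrite /ncount big1 => [|j _]; first by rewrite l0 mulr0 mul0r lexx.
  by move: (ltn_ord j); rewrite [X in (_ < X)%N]l0.
set k := l%:R * dsum s a; have k_gt0 : 0 < k by rewrite mulr_gt0 ?ltr0n.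
set L := logterm S A H delta.
have expL : expR L = twoHSA / delta by rewrite lnK // posrE divr_gt0.
have L_ge0 : 0 <= L.
  rewrite -ler_expR expR0 expL ler_pdivlMr // mul1r.
  exact: le_trans (ltW delta_lt1) (twoHSA_ge1 s a).
(* this lambda makes lambda * fbonus - 2 lambda^2 u^2 = 2 L / k *)
set lambda := Num.sqrt (L / k) / u; set sigma : R := (-1) ^+ b.
set W := fun D : Dt => \prod_(j < l) \prod_(v < H)
  expR (score_step s a lambda sigma (st (D j) v) (act (D j) v) (nst (D j) v)).
have W_ge0 D : 0 <= W D by do 2![apply: prodr_ge0 => ? _]; exact: expR_ge0.
have deviates_W D : deviates s a b D -> expR L <= W D.
  case/andP=> N_gt N_dev.
  have k_le : k <= 2 * (ncount D s a)%:R by move: N_gt; rewrite -mulrA -/k; lra.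
  rewrite /W -(eq_bigr _ (fun j _ => expR_sum _ _ _)) -expR_sum ler_expR sum_score_step.
  exact: chernoff_exponent u_gt0 L_ge0 k_gt0 k_le (ltW N_dev).
have sigma_le1 : `|sigma| <= 1 by rewrite normr_sign.
have := le_trans (markov_fin (data_prob_ge0 hd1 hmu hP (l:=l)) W_ge0 deviates_W)
                 (expR_score_expect_le1 s a lambda sigma_le1).
rewrite expL => markov; rewrite -(ler_pM2l (_ : 0 < twoHSA / delta)) ?divr_gt0 //.
by apply: le_trans markov _; rewrite (_ : _ * _ = 1) //; field; rewrite !gt_eqF.
Qed.

Lemma gest_bounds s a (D : Dt) : 0 < dsum s a ->
  ~~ deviates s a true D -> ~~ deviates s a false D ->
  0 <= PV s a - gest d1 mu P V Vin u delta D s a <= 2 * fbonus s a.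
Proof.
move=> dsum_gt0 no_under no_over.
have f_ge0 : 0 <= fbonus s a by rewrite mulr_ge0 ?sqrtr_ge0 ?mulr_ge0 ?ltW.
rewrite /gest; case: ifP => [_|]; first by apply/andP; split; lra.
move/negbT; rewrite -ltNge => N_gt.
move: no_under no_over; rewrite /deviates N_gt /= expr1 expr0 mulN1r mul1r -!leNgt.
have N_gt0 : 0 < (ncount D s a)%:R :> R.
  by apply: le_lt_trans _ N_gt; rewrite !mulr_ge0 ?invr_ge0 ?ler0n ?ltW.
rewrite -/(incr_sum D s a); move: (ncount D s a)%:R (incr_sum D s a) N_gt0 => N I N_gt0 under over.
have over' : N^-1 * I - PV s a <= fbonus s a.
  by rewrite -(ler_pM2l N_gt0) mulrBr mulrA divff ?mul1r ?gt_eqF.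
have under' : PV s a - N^-1 * I <= fbonus s a.
  by rewrite -(ler_pM2l N_gt0) mulrBr mulrA divff ?mul1r ?gt_eqF // -opprB.
by apply/andP; split; lra.
Qed.

Definition estimate_ok (D : Dt) : bool :=
  [forall s : S, forall a : A,
     (0 < dsum s a) ==>
     ((0 <= PV s a - gest d1 mu P V Vin u delta D s a) &&
      (PV s a - gest d1 mu P V Vin u delta D s a
         <= 8 * u * Num.sqrt (logterm S A H delta / (l%:R * dsum s a))))].

Lemma not_estimate_ok_deviates D : ~~ estimate_ok D ->
  exists i : S * A * bool, (0 < dsum i.1.1 i.1.2) && deviates i.1.1 i.1.2 i.2 D.
Proof.
case/forallPn => s /forallPn [a]; rewrite negb_imply => /andP[dsum_gt0 not_ok].
have [dev | /norP[no_under no_over]] := boolP (deviates s a true D || deviates s a false D).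
  by case/orP: dev => dev; [exists (s, a, true) | exists (s, a, false)]; rewrite dsum_gt0.
move: not_ok; rewrite (_ : 8 * u * _ = 2 * fbonus s a) ?gest_bounds //.
by rewrite /Defs.fbonus; ring.
Qed.

Lemma estimate_ok_prob : 1 - delta / H%:R <= \sum_(D | estimate_ok D) data_prob D.
Proof.
have := sum_data_prob hd1 hmu hP l; rewrite (bigID estimate_ok) /=.
suff : \sum_(D | ~~ estimate_ok D) data_prob D <= delta / H%:R by lra.
apply: le_trans (union_bound_fin (data_prob_ge0 hd1 hmu hP (l:=l)) not_estimate_ok_deviates) _.
apply: le_trans (_ : \sum_(i : S * A * bool) delta / twoHSA <= _).
  apply: ler_sum => -[[s a] b] _ /=; have [dsum_gt0|_] := boolP (0 < dsum s a).
    exact: deviates_prob.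
  by rewrite big_pred0 // divr_ge0 ?ltW // (lt_le_trans _ (twoHSA_ge1 s a)).
rewrite sumr_const !card_prod card_bool /twoHSA.
have [SA0|SA_gt0] := posnP (#|S| * #|A|)%N.
  by rewrite SA0 mul0n mulr0n divr_ge0 ?ler0n ?ltW.
rewrite -(mulr_natr (delta / _)) !natrM le_eqVlt; apply/orP; left; apply/eqP.
have /andP[S_gt0 A_gt0] : (0 < #|S|)%N && (0 < #|A|)%N by rewrite -muln_gt0.
by field; rewrite !pnatr_eq0 -!lt0n H_gt0 S_gt0 A_gt0.
Qed.

End Concentration.

Theorem lemmaC3 (R : realType) (S A : finType) (H : nat)
  (d1 : S -> R) (mu : 'I_H -> S -> A -> R) (P : S -> A -> S -> R)
  (hd1 : is_dist d1)
  (hmu : forall (v : 'I_H) (s : S), is_dist (mu v s))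
  (hP : forall (s : S) (a : A), is_dist (P s a))
  (t : 'I_H) (u delta : R) (l : nat)
  (V Vin : S -> R)
  (hu : 0 < u) (hdelta0 : 0 < delta) (hdelta1 : delta < 1)
  (hV : forall s : S, `|V s - Vin s| <= 2 * u) :
  1 - delta / H%:R <=
  \sum_(D : {ffun 'I_l -> traj S A H} |
        [forall s : S, forall a : A,
          (0 < dsum d1 mu P s a) ==>
          ((0 <= PV P V Vin s a - gest d1 mu P V Vin u delta D s a) &&
           (PV P V Vin s a - gest d1 mu P V Vin u delta D s a
              <= 8 * u * Num.sqrt (logterm S A H delta
                                   / (l%:R * dsum d1 mu P s a))))])
    data_prob d1 mu P D.
Proof.
(* [t] only serves to show [0 < H]. *)
have H_gt0 : (0 < H)%N := leq_ltn_trans (leq0n t) (ltn_ord t).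
have := estimate_ok_prob hd1 hmu hP l hu hdelta0 hdelta1 hV H_gt0.
exact.
Qed.
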